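(* Let $\lambda>0$, $1<p<\infty$, $\alpha\in\mathbb R$, and $w(t):=t^{\alpha}$ on $\mathbb R_+=(0,\infty)$. Then (1) $w\in A_p(\mu)$ if and only if $-1-2\lambda<\alpha<p-1+2\lambda(p-1)$; (2) $w\in \widetilde A_{p,\lambda}$ if and only if $-1<\alpha<p-1+(2\lambda+1)p$.
   Context: On $\mathbb R_+=(0,\infty)$ let $d\mu(x)=x^{2\lambda}\,dx$ and $d\nu_\lambda(x)=x^{2\lambda+1}\,dx$, where $dx$ is Lebesgue measure; ''interval'' means an interval $B=(a,b)\subset\mathbb R_+$; $p'=p/(p-1)$. $A_p(\mu)$ is the classical Muckenhoupt class on $(\mathbb R_+,|\cdot|,\mu)$: $w\ge0$ with $\sup_B\big(\frac1{\mu(B)}\int_B w\,d\mu\big)\big(\frac1{\mu(B)}\int_B w^{-1/(p-1)}\,d\mu\big)^{p-1}<\infty$, the supremum over intervals $B\subset\mathbb R_+$. $\widetilde A_{p,\lambda}$ is the class of non-negative measurable $w$ for which there is $C>0$ such that for every interval $B\subset\mathbb R_+$, $\big(\frac1{\nu_\lambda(B)}\int_B w(t)\,dt\big)\big(\frac1{\nu_\lambda(B)}\int_B t^{(2\lambda+1)p'}w(t)^{-\frac1{p-1}}\,dt\big)^{p-1}<C.$ *)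

From HB Require Import structures.
From mathcomp Require Import all_boot all_order all_algebra.
From mathcomp Require Import all_classical all_reals all_analysis.
Set Implicit Arguments. Unset Strict Implicit. Unset Printing Implicit Defensive.
Import Order.TTheory GRing.Theory Num.Theory.
Local Open Scope classical_set_scope.
Local Open Scope ring_scope.

Section Defs.
Variable R : realType.

Definition wint (g f : R -> R) (a b : R) : \bar R :=
  (\int[lebesgue_measure]_(x in `]a, b[) (f x * g x)%:E)%E.

Definition dmu (lam : R) : R -> R := fun x => x `^ (2 * lam).
Definition dnu (lam : R) : R -> R := fun x => x `^ (2 * lam + 1).

Definition wmeas (g : R -> R) (a b : R) : \bar R := wint g (fun _ => 1) a b.

Definition wavg (g : R -> R) (f : R -> R) (a b : R) : \bar R :=
  ((fine (wmeas g a b))^-1)%:E * wint g f a b.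

Definition conj_exp (p : R) : R := p / (p - 1).

Definition Ap_mu (lam p : R) (w : R -> R) : Prop :=
  (forall x, 0 < x -> 0 <= w x) /\
  exists C : R, forall a b : R, 0 <= a -> a < b ->
    (wavg (dmu lam) w a b *
      poweR (wavg (dmu lam) (fun t => (w t `^ (- (p - 1)^-1))%R) a b) (p - 1)
      < C%:E)%E.

Definition Atilde (lam p : R) (w : R -> R) : Prop :=
  (forall x, 0 < x -> 0 <= w x) /\
  exists C : R, forall a b : R, 0 <= a -> a < b ->
    (((fine (wmeas (dnu lam) a b))^-1)%:E * wint (fun _ => 1%R) w a b *
      poweR (((fine (wmeas (dnu lam) a b))^-1)%:E *
             wint (fun _ => 1%R)
               (fun t => (t `^ ((2 * lam + 1) * conj_exp p) * w t `^ (- (p - 1)^-1))%R) a b)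
            (p - 1)
      < C%:E)%E.

End Defs.

From mathcomp Require Import all_boot all_order all_algebra.
From mathcomp Require Import all_classical all_reals all_analysis.
From mathcomp Require Import ring lra measurable_realfun.
Import Order.TTheory GRing.Theory Num.Theory numFieldNormedType.Exports.
Local Open Scope ring_scope.

(* For a power weight, each of the three integrals in either Muckenhoupt
   quotient is a power integral [I_s(a,b) = \int_a^b x^(s-1) dx]: with exponent
   s0 for the measure of the interval, s1 for the weight and s2 for the dual
   weight, and these satisfy [s1 + q s2 = (1 + q) s0] with q = p - 1.  If
   [s1 <= 0] or [s2 <= 0], the corresponding integral over (0,1) diverges, so
   the quotient is infinite there.  If both are positive, the elementary
   estimate [I_s = (b^s - a^s)/s <= c_s b^(s - s0) I_s0] bounds the quotient
   [(I_s1/I_s0) (I_s2/I_s0)^q] by a constant times a power of b whose exponent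
   vanishes by the exponent relation.  The two conditions [0 < s1], [0 < s2]
   are exactly the stated ranges for alpha. *)

Set Implicit Arguments.
Unset Strict Implicit.

Section power_integrals.
Variable R : realType.
Notation mu := lebesgue_measure.
Local Open Scope classical_set_scope.

Lemma gt0_powRD (x r t : R) : 0 < x -> x `^ (r + t) = x `^ r * x `^ t.
Proof. by move=> x0; rewrite powRD // (gt_eqF x0) implybT. Qed.

(* For u <= 1/2 the bound is trivial; otherwise u^r = exp(r ln u) >= 1 + r ln u
   and ln u >= 1 - 1/u >= -2 (1 - u). *)
Lemma one_sub_powR_le (u r : R) : 0 <= u -> u <= 1 -> 0 <= r ->
  1 - u `^ r <= 2 * (1 + r) * (1 - u).
Proof.
move=> u0 u1 r0; have [uh|uh] := leP u 2^-1.
  by have := powR_ge0 u r; nra.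
have u_gt0 : 0 < u by apply: lt_trans uh; rewrite invr_gt0.
have uV_gt0 : 0 < u^-1 by rewrite invr_gt0.
have uV_lt2 : u^-1 < 2 by rewrite -[2]invrK ltf_pV2 ?posrE.
have uVu : u * u^-1 = 1 by rewrite mulfV ?gt_eqF.
have ln_ge : 1 - u^-1 <= ln u.
  have := @le_ln1Dx _ (u^-1 - 1); rewrite (addrC 1) subrK lnV ?posrE //.
  by move=> /(_ ltac:(lra)); lra.
have rln_ge : r * (1 - u^-1) <= r * ln u by rewrite ler_wpM2l.
have r_ge : r * (u^-1 * (1 - u)) <= r * (2 * (1 - u)).
  by apply: ler_wpM2l => //; apply: ler_wpM2r; lra.
have := expR_ge1Dx (r * ln u); rewrite /powR gt_eqF //; nra.
Qed.

Lemma powR_sub_powR_le (a b s s0 : R) : 0 <= a -> a < b -> 0 < s -> 0 < s0 ->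
  b `^ s - a `^ s <= 2 * (1 + s / s0) * b `^ (s - s0) * (b `^ s0 - a `^ s0).
Proof.
move=> a0 ab s_gt0 s0_gt0; have b0 : 0 < b by apply: le_lt_trans ab.
set t := a / b; set r := s / s0.
have at_ : a = t * b by rewrite /t divfK ?gt_eqF.
have t0 : 0 <= t by rewrite /t divr_ge0 // ltW.
have t1 : t <= 1 by rewrite /t ler_pdivrMr // mul1r ltW.
have r0 : 0 <= r by rewrite /r divr_ge0 // ltW.
have sE : s = s0 * r by rewrite /r mulrC divfK ?gt_eqF.
have ts0_le1 : t `^ s0 <= 1.
  by have := @ge0_ler_powR _ s0 (ltW s0_gt0) t 1; rewrite powR1; apply; rewrite ?nnegrE.
have := one_sub_powR_le (powR_ge0 t s0) ts0_le1 r0.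
have -> : a `^ s = (t `^ s0) `^ r * b `^ s.
  by rewrite at_ powRM ?(ltW b0) // -powRrM -sE.
have -> : a `^ s0 = t `^ s0 * b `^ s0 by rewrite at_ powRM // ltW.
have -> : b `^ s = b `^ (s - s0) * b `^ s0 by rewrite -gt0_powRD // subrK.
set P := b `^ (s - s0) * b `^ s0 => bern.
have P0 : 0 <= P by rewrite mulr_ge0 ?powR_ge0.
have := ler_wpM2l P0 bern; rewrite /P; nra.
Qed.

Definition pow_integral (s a b : R) : \bar R :=
  (\int[mu]_(x in `]a, b[) (x `^ (s - 1))%:E)%E.

Definition pow_integral_val (s a b : R) : R := (b `^ s - a `^ s) / s.

Lemma pow_integral_val_gt0 (s a b : R) : 0 <= a -> a < b -> 0 < s ->
  0 < pow_integral_val s a b.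
Proof.
move=> a0 ab s0; rewrite divr_gt0 // subr_gt0.
by apply: gt0_ltr_powR; rewrite ?nnegrE // ltW // (le_lt_trans a0).
Qed.

Lemma pow_integral_val_ratio_le (s s0 a b : R) : 0 <= a -> a < b -> 0 < s -> 0 < s0 ->
  pow_integral_val s a b / pow_integral_val s0 a b <= 2 * (1 + s0 / s) * b `^ (s - s0).
Proof.
move=> a0 ab s_gt0 s0_gt0; have I0 := pow_integral_val_gt0 a0 ab s0_gt0.
rewrite ler_pdivrMr // /pow_integral_val.
have -> : 2 * (1 + s0 / s) * b `^ (s - s0) * ((b `^ s0 - a `^ s0) / s0)
   = 2 * (1 + s / s0) * b `^ (s - s0) * (b `^ s0 - a `^ s0) / s.
  by field; rewrite ?gt_eqF.
by apply: ler_wpM2r; [rewrite invr_ge0 ltW | exact: powR_sub_powR_le].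
Qed.

Lemma pow_integral_val_quot_le (s0 s1 s2 q a b : R) :
  0 <= a -> a < b -> 0 < s0 -> 0 < s1 -> 0 < s2 -> 0 < q ->
  s1 + q * s2 = (1 + q) * s0 ->
  pow_integral_val s1 a b / pow_integral_val s0 a b *
    (pow_integral_val s2 a b / pow_integral_val s0 a b) `^ q
  <= 2 * (1 + s0 / s1) * (2 * (1 + s0 / s2)) `^ q.
Proof.
move=> a0 ab s0_gt0 s1_gt0 s2_gt0 q_gt0 e.
have b0 : 0 < b by apply: le_lt_trans ab.
have I0 := pow_integral_val_gt0 a0 ab s0_gt0.
have I1 := pow_integral_val_gt0 a0 ab s1_gt0.
have I2 := pow_integral_val_gt0 a0 ab s2_gt0.
have c2 : 0 <= 2 * (1 + s0 / s2) by rewrite mulr_ge0 // addr_ge0 // divr_ge0 ?ltW.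
have le2 : (pow_integral_val s2 a b / pow_integral_val s0 a b) `^ q
    <= (2 * (1 + s0 / s2)) `^ q * b `^ ((s2 - s0) * q).
  rewrite powRrM -powRM ?powR_ge0 //.
  apply: ge0_ler_powR; first exact: ltW.
  - by rewrite nnegrE divr_ge0 // ltW.
  - by rewrite nnegrE mulr_ge0 // powR_ge0.
  - exact: pow_integral_val_ratio_le.
have I10 : 0 <= pow_integral_val s1 a b / pow_integral_val s0 a b.
  by rewrite divr_ge0 // ltW.
apply: le_trans
  (ler_pM I10 (powR_ge0 _ _) (pow_integral_val_ratio_le a0 ab s1_gt0 s0_gt0) le2) _.
rewrite mulrACA -gt0_powRD //.
have -> : s1 - s0 + (s2 - s0) * q = 0 by lra.
by rewrite powRr0 mulr1.
Qed.

Lemma measurable_powR_EFin (s : R) (A : set R) : measurable A ->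
  measurable_fun A ((fun x => (x `^ s)%:E) : R -> \bar R).
Proof.
by move=> mA; apply/measurable_EFinP; apply: measurable_funTS; exact: measurable_powR.
Qed.

Lemma continuous_powR_gt0 (s x : R) : 0 < x -> {for x, continuous (fun y : R => y `^ s)}.
Proof.
move=> x0; apply: differentiable_continuous; apply/derivable1_diffP.
by apply: derivable_powR; rewrite in_itv /= x0.
Qed.

Lemma pow_integralE_pos (s a b : R) : 0 < a -> a < b -> s != 0 ->
  pow_integral s a b = (pow_integral_val s a b)%:E.
Proof.
move=> a0 ab s0; pose F x := s^-1 * x `^ s.
have gt_a_gt0 x : a < x -> 0 < x by exact: lt_trans.
rewrite /pow_integral -(@integral_itv_bndoo _ _ _ _ true false);
  last exact: measurable_powR_EFin.
have -> : pow_integral_val s a b = F b - F a by rewrite /F -mulrBr mulrC.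
apply: continuous_FTC2 => //.
- apply: continuous_in_subspaceT => x; rewrite inE /= in_itv /= => /andP[ax _].
  exact/continuous_powR_gt0/(lt_le_trans a0).
- split.
  + move=> x; rewrite in_itv /= => /andP[ax _].
    by apply: derivableM => //; apply: derivable_powR; rewrite in_itv /= andbT gt_a_gt0.
  + apply: cvg_at_right_filter; apply: cvgM; first exact: cvg_cst.
    exact: continuous_powR_gt0.
  + apply: cvg_at_left_filter; apply: cvgM; first exact: cvg_cst.
    exact/continuous_powR_gt0/gt_a_gt0.
- move=> x; rewrite in_itv /= => /andP[/gt_a_gt0 x0 _].
  rewrite derive1E deriveM //=; last by apply: derivable_powR; rewrite in_itv /= x0.
  rewrite -derive1E powR_derive1 ?in_itv /= ?x0 // derive_cst scaler0 addr0.
  by rewrite /GRing.scale /= mulrA mulVf // mul1r.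
Qed.

Lemma bigcup_itv_oo_shrink (b : R) : 0 < b ->
  \bigcup_n `](b / n.+2%:R), b[ = `]0, b[.
Proof.
move=> b0; rewrite eqEsubset; split=> x.
  case=> n _; rewrite /= !in_itv /= => /andP[bnx ->]; rewrite andbT.
  by apply: lt_trans bnx; rewrite divr_gt0.
rewrite /= in_itv /= => /andP[x0 xb]; exists (Num.truncn (b / x)) => //.
rewrite /= in_itv /= xb andbT ltr_pdivrMr // -ltr_pdivrMl // mulrC.
by apply: lt_le_trans (truncnS_gt _) _; rewrite ler_nat.
Qed.

(* The integrand may blow up at 0, so the case [a = 0] goes through monotone
   convergence over the intervals (b/(n+2), b). *)
Lemma pow_integral0E (s b : R) : 0 < b -> 0 < s ->
  pow_integral s 0 b = (pow_integral_val s 0 b)%:E.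
Proof.
move=> b0 s0; pose u n : R := b / n.+2%:R.
have u_gt0 n : 0 < u n by rewrite divr_gt0.
have u_ltb n : u n < b by rewrite ltr_pdivrMr // ltr_pMr // ltr1n.
have u_cvg0 : u n @[n --> \oo] --> 0.
  have harm : [sequence harmonic n.+1]_n @ \oo --> (0 : R).
    by rewrite cvg_shiftS; exact: cvg_harmonic.
  by rewrite -(mulr0 b); apply: cvgM; [exact: cvg_cst | exact: harm].
have nd : nondecreasing_seq (fun n => `](u n), b[).
  apply/nondecreasing_seqP => n; rewrite subsetEset; apply: subset_itvr.
  by rewrite bnd_simp ler_pM2l // lef_pV2 ?posrE // ler_nat.
have := @ge0_nondecreasing_set_cvg_integral _ (measurableTypeR R) _ _
  (fun x => (x `^ (s - 1))%:E) mu nd (fun n => measurable_itv _)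
  (fun n => measurable_powR_EFin (s - 1) (measurable_itv _))
  (fun n x _ => powR_ge0 x (s - 1)).
rewrite bigcup_itv_oo_shrink //.
have -> : (fun n => \int[mu]_(x in `](u n), b[) (x `^ (s - 1))%:E)%E
    = (fun n => (pow_integral_val s (u n) b)%:E).
  by apply/funext => n; apply: pow_integralE_pos; rewrite ?gt_eqF.
suff cvg_val : (pow_integral_val s (u n) b)%:E @[n --> \oo]
    --> (pow_integral_val s 0 b)%:E by move=> cvg_int; exact: cvg_unique cvg_int cvg_val.
apply: cvg_EFin; first exact: nearW.
apply: cvgM; last exact: cvg_cst.
rewrite powR0 ?gt_eqF //; apply: cvgB; first exact: cvg_cst.
by move/cvg_at_rightP : (powR_cvg0 s0); apply; split.
Qed.

Lemma pow_integralE (s a b : R) : 0 <= a -> a < b -> 0 < s ->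
  pow_integral s a b = (pow_integral_val s a b)%:E.
Proof.
move=> a0 ab s0; have [a_eq0|a_neq0] := eqVneq a 0.
  by move: ab; rewrite a_eq0 => b0; exact: pow_integral0E.
by apply: pow_integralE_pos; rewrite ?gt_eqF // lt_neqAle eq_sym a_neq0.
Qed.

Lemma pow_integral_val01 (s : R) : 0 < s -> pow_integral_val s 0 1 = s^-1.
Proof. by move=> s0; rewrite /pow_integral_val powR0 ?gt_eqF // powR1 subr0 div1r. Qed.

(* On (0,1), [x^(s-1) >= x^(d-1)] for every [0 < d], whose integral is [1/d]. *)
Lemma pow_integral01_pinfty (s : R) : s <= 0 -> pow_integral s 0 1 = +oo%E.
Proof.
move=> s0; apply: eq_infty => r; pose d := (`|r| + 2)^-1.
have r2_gt1 : 1 < `|r| + 2 by have := normr_ge0 r; lra.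
have d0 : 0 < d by rewrite invr_gt0; lra.
have d1 : d < 1 by rewrite invf_lt1 //; lra.
apply: (@le_trans _ _ (d^-1)%:E); first by rewrite lee_fin invrK; have := ler_norm r; lra.
rewrite -pow_integral_val01 // -pow_integralE //.
apply: ge0_le_integral => //.
- by move=> x _; rewrite lee_fin powR_ge0.
- exact: measurable_powR_EFin.
- exact: measurable_powR_EFin.
- move=> x; rewrite /= in_itv /= => /andP[x0 x1]; rewrite lee_fin.
  by apply: ger_powR; [rewrite x0 ltW | lra].
Qed.

Lemma pow_integral01_gt0 (s : R) : (0 < pow_integral s 0 1)%E.
Proof.
have [s0|s0] := ltP 0 s; last by rewrite pow_integral01_pinfty.
by rewrite pow_integralE // pow_integral_val01 // lte_fin invr_gt0.
Qed.

Definition pow_quot (s0 s1 s2 q a b : R) : \bar R :=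
  (((fine (pow_integral s0 a b))^-1)%:E * pow_integral s1 a b *
    poweR (((fine (pow_integral s0 a b))^-1)%:E * pow_integral s2 a b) q)%E.

Lemma pow_quot_bounded_iff (E : R -> R -> \bar R) (s0 s1 s2 q : R) :
  0 < s0 -> 0 < q -> s1 + q * s2 = (1 + q) * s0 ->
  (forall a b, 0 <= a -> E a b = pow_quot s0 s1 s2 q a b) ->
  (exists C : R, forall a b, 0 <= a -> a < b -> (E a b < C%:E)%E) <-> 0 < s1 /\ 0 < s2.
Proof.
move=> s0_gt0 q_gt0 e EE; split.
  case=> C /(_ 0 1 (lexx _) ltr01); rewrite EE // /pow_quot.
  rewrite pow_integralE // pow_integral_val01 //= invrK => bounded.
  have I1 := pow_integral01_gt0 s1; have I2 := pow_integral01_gt0 s2.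
  have s0E : (0 < s0%:E)%E by rewrite lte_fin.
  split; rewrite ltNge; apply/negP => /pow_integral01_pinfty I_inf;
    move: bounded; rewrite I_inf.
    by rewrite gt0_muley // gt0_mulye ?poweR_gt0 ?mule_gt0.
  by rewrite gt0_muley // poweRyr ?gt_eqF // gt0_muley ?mule_gt0.
case=> s1_gt0 s2_gt0.
exists (2 * (1 + s0 / s1) * (2 * (1 + s0 / s2)) `^ q + 1) => a b a0 ab.
rewrite EE // /pow_quot !pow_integralE //= -!EFinM lte_fin ltr_pwDr //.
rewrite ![(pow_integral_val s0 a b)^-1 * _]mulrC.
exact: pow_integral_val_quot_le.
Qed.

Lemma wint_powR (g f : R -> R) (s a b : R) : 0 <= a ->
  (forall x, 0 < x -> f x * g x = x `^ (s - 1)) -> wint g f a b = pow_integral s a b.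
Proof.
move=> a0 fg; apply: eq_integral => x; rewrite inE /= in_itv /= => /andP[ax _].
by rewrite fg // (le_lt_trans a0).
Qed.

End power_integrals.

Section power_weights.
Variables (R : realType) (lam p alpha : R).
Hypotheses (lam_gt0 : 0 < lam) (p_gt1 : 1 < p).

Let q_gt0 : 0 < p - 1. Proof. by rewrite subr_gt0. Qed.

Let weight_ge0 (x : R) : 0 < x -> 0 <= x `^ alpha. Proof. by move=> _; exact: powR_ge0. Qed.

Lemma Ap_mu_powR :
  Ap_mu lam p (fun t => t `^ alpha) <->
  -1 - 2 * lam < alpha /\ alpha < p - 1 + 2 * lam * (p - 1).
Proof.
pose s2 := ((2 * lam + 1) * (p - 1) - alpha) / (p - 1).
have s2_gt0 : 0 < s2 <-> alpha < p - 1 + 2 * lam * (p - 1).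
  by rewrite pmulr_lgt0 ?invr_gt0 //; split=> ?; lra.
have avgE (a b : R) : 0 <= a ->
    (wavg (dmu lam) (fun t => t `^ alpha)%R a b *
     poweR (wavg (dmu lam) (fun t => (t `^ alpha) `^ (- (p - 1)^-1))%R a b) (p - 1))%E
    = pow_quot (2 * lam + 1) (alpha + 2 * lam + 1) s2 (p - 1) a b.
  move=> a0; rewrite /wavg /wmeas /dmu.
  rewrite (@wint_powR _ _ _ (2 * lam + 1)) => [|//|x x0]; last by rewrite mul1r; congr powR; ring.
  rewrite (@wint_powR _ _ _ (alpha + 2 * lam + 1)) => [|//|x x0]; last first.
    by rewrite -gt0_powRD //; congr powR; ring.
  rewrite (@wint_powR _ _ _ s2) => [//|//|x x0].
  by rewrite -powRrM -gt0_powRD //; congr powR; rewrite /s2; field; rewrite gt_eqF.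
have s1_gt0 : 0 < alpha + 2 * lam + 1 <-> -1 - 2 * lam < alpha by split=> ?; lra.
rewrite /Ap_mu (pow_quot_bounded_iff _ q_gt0 _ avgE); last 2 first.
- by rewrite addr_gt0 // mulr_gt0.
- by rewrite /s2; field; rewrite gt_eqF.
by rewrite s1_gt0 s2_gt0; split=> [[]|] //; exact: conj weight_ge0.
Qed.

Lemma Atilde_powR :
  Atilde lam p (fun t => t `^ alpha) <->
  -1 < alpha /\ alpha < p - 1 + (2 * lam + 1) * p.
Proof.
pose s2 := ((2 * lam + 1) * p + (p - 1) - alpha) / (p - 1).
have s2_gt0 : 0 < s2 <-> alpha < p - 1 + (2 * lam + 1) * p.
  by rewrite pmulr_lgt0 ?invr_gt0 //; split=> ?; lra.
have s1_gt0 : 0 < alpha + 1 <-> -1 < alpha by split=> ?; lra.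
have avgE (a b : R) : 0 <= a ->
    (((fine (wmeas (dnu lam) a b))^-1)%:E * wint (fun=> 1%R) (fun t => t `^ alpha)%R a b *
     poweR (((fine (wmeas (dnu lam) a b))^-1)%:E *
       wint (fun=> 1%R) (fun t => t `^ ((2 * lam + 1) * conj_exp p) *
                                  (t `^ alpha) `^ (- (p - 1)^-1))%R a b) (p - 1))%E
    = pow_quot (2 * lam + 2) (alpha + 1) s2 (p - 1) a b.
  move=> a0; rewrite /wmeas /dnu.
  rewrite (@wint_powR _ _ _ (2 * lam + 2)) => [|//|x x0]; last by rewrite mul1r; congr powR; ring.
  rewrite (@wint_powR _ _ _ (alpha + 1)) => [|//|x x0]; last by rewrite mulr1; congr powR; ring.
  rewrite (@wint_powR _ _ _ s2) => [//|//|x x0].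
  rewrite mulr1 -powRrM -gt0_powRD //; congr powR.
  by rewrite /s2 /conj_exp; field; rewrite gt_eqF.
rewrite /Atilde (pow_quot_bounded_iff _ q_gt0 _ avgE); last 2 first.
- by rewrite addr_gt0 // mulr_gt0.
- by rewrite /s2; field; rewrite gt_eqF.
by rewrite s1_gt0 s2_gt0; split=> [[]|] //; exact: conj weight_ge0.
Qed.

End power_weights.

Theorem proposition1p1 (R : realType) (lam p alpha : R)
  (hlam : 0 < lam) (hp : 1 < p) :
  let w := fun t : R => t `^ alpha in
  (Ap_mu lam p w <-> (-1 - 2 * lam < alpha /\ alpha < p - 1 + 2 * lam * (p - 1))) /\
  (Atilde lam p w <-> (-1 < alpha /\ alpha < p - 1 + (2 * lam + 1) * p)).
Proof. by split; [exact: Ap_mu_powR | exact: Atilde_powR]. Qed.
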